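(* Consider DIVIDE-THROW-RESIDUE. Then $\mathcal{SG}(n)=i_o(n)=k$, if $n= 2^m(2k-1)$, for some integer $m\ge 0$.
   Context: DIVIDE-THROW-RESIDUE is the impartial normal-play heap game where a move from a heap $n$ writes $n=kd+r$ with $1\le d<n$, $k\ge1$, $0\le r<d$, and moves to the disjunctive sum of $k$ heaps of size $d$ (the remainder $r$ is discarded); a heap of size $1$ is terminal. $\mathcal{SG}$ denotes the Sprague-Grundy value (mex rule, nim-sum for disjunctive sums). $i_o(n)$ is the index of the largest odd factor: $i_o(2^m(2k-1))=k$. *)

From mathcomp Require Import all_boot.
From Stdlib Require PeanoNat.
Set Implicit Arguments. Unset Strict Implicit. Unset Printing Implicit Defensive.

Definition mex (s : seq nat) : nat := find (fun i => i \notin s) (iota 0 (size s).+1).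

Definition nimsum (s : seq nat) : nat := foldr Nat.lxor 0 s.

(* A move from heap n chooses d, k, r with n = k*d + r, 1 <= d < n, k >= 1,
   0 <= r < d, and leads to the disjunctive sum of k heaps of size d, whose
   SG value is the nim-sum of k copies of SG(d). *)
Fixpoint sgf (fuel n : nat) : nat :=
  match fuel with
  | 0 => 0
  | fuel'.+1 =>
      mex [seq nimsum (nseq (t.1.2) (sgf fuel' t.1.1)) |
             t <- [seq t <- flatten [seq [seq (dk, r) | r <- iota 0 dk.1]
                                   | dk <- [seq (d, k) | d <- iota 1 n.-1, k <- iota 1 n]]
                  | n == t.1.2 * t.1.1 + t.2]]
  end.

(* SG(n); fuel n.+1 is more than enough since every option has heaps of size < n. *)
Definition SG (n : nat) : nat := sgf n.+1 n.

(* index of the largest odd factor: i_o(2^m (2k-1)) = k *)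
Definition io (n : nat) : nat := (n %/ 2 ^ logn 2 n).+1./2.

(* An option (d, k, r) of n has value SG(d) when k is odd and
   0 when k is even.  Write n = 2^m o with o odd.  For every odd o' < o the
   largest d = 2^a o' <= n satisfies n < 2d, so the single heap (d, k = 1) is an
   option of value i_o(d) = i_o(o'); together with d = 1 this realises every
   value below i_o(n).  Conversely an option of value i_o(n) needs d = 2^b o
   with b < m, whence k = 2^(m-b) is even and the option is worth 0. *)
From mathcomp Require Import all_boot.
From mathcomp Require Import zify.
From Stdlib Require PeanoNat.

Set Implicit Arguments. Unset Strict Implicit. Unset Printing Implicit Defensive.

Lemma mex_eq s v : (forall i, i < v -> i \in s) -> v \notin s -> mex s = v.
Proof.
move=> below_v v_notin.
have v_le_size : v <= size s.
  rewrite -[v](size_iota 0) uniq_leq_size ?iota_uniq // => i.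
  by rewrite mem_iota => /andP [_ /below_v].
rewrite /mex -(subnKC v_le_size) -addnS iotaD find_cat size_iota add0n.
have -> : has (fun i => i \notin s) (iota 0 v) = false.
  by apply/hasPn => i; rewrite mem_iota negbK => /andP [_ /below_v].
by rewrite /= v_notin addn0.
Qed.

Lemma nimsum_nseq k v : nimsum (nseq k v) = if odd k then v else 0.
Proof.
elim: k => //= k IHk; rewrite /nimsum /= -/(nimsum _) IHk.
by case: (odd k); [exact: PeanoNat.Nat.lxor_nilpotent | exact: PeanoNat.Nat.lxor_0_r].
Qed.

Definition moves (n : nat) : seq (nat * nat * nat) :=
  [seq t <- flatten [seq [seq (dk, r) | r <- iota 0 dk.1]
                       | dk <- [seq (d, k) | d <- iota 1 n.-1, k <- iota 1 n]]
      | n == t.1.2 * t.1.1 + t.2].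

Definition option_values (sg : nat -> nat) (n : nat) : seq nat :=
  [seq nimsum (nseq t.1.2 (sg t.1.1)) | t <- moves n].

Lemma sgfS fuel n : sgf fuel.+1 n = mex (option_values (sgf fuel) n).
Proof. by []. Qed.

Lemma movesP n d k r : ((d, k), r) \in moves n ->
  [/\ 0 < d < n, r < d & n = k * d + r].
Proof.
rewrite mem_filter => /andP [/eqP /= n_eq /flatten_mapP [[d' k'] dk_in]].
case/allpairsP: dk_in => -[d'' k''] [/= d_in _ [? ?]] /mapP [r' r_in [? ? ?]].
by subst; rewrite !mem_iota in d_in r_in; split; lia.
Qed.

Lemma mem_moves n d k r : 0 < d < n -> 0 < k <= n -> r < d -> n = k * d + r ->
  ((d, k), r) \in moves n.
Proof.
move=> d_bd k_bd r_lt n_eq.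
rewrite mem_filter /= -n_eq eqxx /=.
apply/flatten_mapP; exists (d, k).
  by apply/allpairsP; exists (d, k); rewrite /= !mem_iota; split=> //; lia.
by apply/mapP; exists r; rewrite // mem_iota.
Qed.

Lemma io_pow2_odd a j : io (2 ^ a * j.*2.+1) = j.+1.
Proof.
have odd_log0 : logn 2 j.*2.+1 = 0.
  by apply: logn_coprime; rewrite coprime2n /= odd_double.
rewrite /io lognM ?expn_gt0 // odd_log0 pfactorK // addn0 mulKn ?expn_gt0 //.
by rewrite -doubleS doubleK.
Qed.

Lemma pow2_odd_decomp n : 0 < n -> exists a j, n = 2 ^ a * j.*2.+1.
Proof.
move=> n_gt0; have [o] := pfactor_coprime (isT : prime 2) n_gt0.
rewrite coprime2n => odd_o ->.
exists (logn 2 n), o./2; rewrite mulnC; congr (_ * _).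
by rewrite -[in LHS](odd_double_half o) odd_o.
Qed.

Lemma pow2_window o n : 0 < o <= n -> exists a, 2 ^ a * o <= n < 2 ^ a.+1 * o.
Proof.
case/andP=> o_gt0 o_le_n.
have q_gt0 : 0 < n %/ o by rewrite divn_gt0.
have /andP [lo hi] := trunc_log_bounds (isT : 1 < 2) q_gt0.
exists (trunc_log 2 (n %/ o)); apply/andP; split.
  by apply: leq_trans (leq_divM n o); rewrite leq_mul2r lo orbT.
by rewrite -ltn_divLR.
Qed.

(* [sg_value 1 = 0] although [io 1 = 1]: a heap of size 1 has no move. *)
Definition sg_value (n : nat) : nat := if n < 2 then 0 else io n.

Lemma option_values_below_io n i : 2 <= n -> i < io n -> i \in option_values sg_value n.
Proof.
move=> n_ge2; have [m [j n_eq]] := pow2_odd_decomp (ltnW n_ge2).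
rewrite n_eq io_pow2_odd; case: i => [_ | i i_lt].
  apply/mapP; exists ((1, n), 0); first by apply: mem_moves; lia.
  by rewrite nimsum_nseq /sg_value /=; case: odd.
have [|a /andP [d_le d_gt]] := @pow2_window i.*2.+1 n; first by rewrite n_eq; nia.
rewrite expnS in d_gt; set d := 2 ^ a * _ in d_le d_gt.
have d_neq : d != n by apply/eqP => /(congr1 io); rewrite n_eq !io_pow2_odd; lia.
apply/mapP; exists ((d, 1), n - d); first by apply: mem_moves; lia.
rewrite /= /nimsum /= PeanoNat.Nat.lxor_0_r /sg_value /d io_pow2_odd.
by case: ltnP => //; lia.
Qed.

Lemma quotient_eq k c d r : r < d -> k * d + r = c * d -> k = c.
Proof.
move=> r_lt eq_kc; have d_gt0 : 0 < d := leq_ltn_trans (leq0n r) r_lt.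
by rewrite -(mulnK c d_gt0) -eq_kc divnMDl // divn_small // addn0.
Qed.

Lemma io_notin_option_values n : 2 <= n -> io n \notin option_values sg_value n.
Proof.
move=> n_ge2; have [m [j n_eq]] := pow2_odd_decomp (ltnW n_ge2).
rewrite {1}n_eq io_pow2_odd.
apply/mapP => [[[[d k] r] /movesP [d_bd r_lt n_dec]]].
rewrite nimsum_nseq /sg_value -[(d, k, r).1.1]/d -[(d, k, r).1.2]/k.
case: ifP => [odd_k | //]; case: ltnP => [// | d_ge2].
have [b [j' d_eq]] := pow2_odd_decomp (ltnW d_ge2).
rewrite d_eq io_pow2_odd => -[j_eq]; subst j'.
have b_lt : b < m.
  rewrite -(ltn_exp2l _ _ (isT : 1 < 2)) -(ltn_pmul2r (isT : 0 < j.*2.+1)).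
  by rewrite -d_eq -n_eq; case/andP: d_bd.
have k_eq : k = 2 ^ (m - b).
  apply: quotient_eq r_lt _.
  by rewrite -n_dec n_eq d_eq mulnA -expnD subnK // ltnW.
by move: odd_k; rewrite k_eq oddX subn_eq0 leqNgt b_lt.
Qed.

Lemma sgf_sg_value fuel n : n < fuel -> sgf fuel n = sg_value n.
Proof.
elim: fuel n => [// | fuel IHfuel] n n_lt; rewrite sgfS.
have -> : option_values (sgf fuel) n = option_values sg_value n.
  apply/eq_in_map => -[[d k] r] /movesP [/andP [_ d_lt] _ _] /=.
  by rewrite IHfuel // (leq_trans d_lt).
case: (ltnP n 2) => [n_lt2 | n_ge2].
  by case: n n_lt n_lt2 => [|[|]].
have -> : sg_value n = io n by rewrite /sg_value ltnNge n_ge2.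
apply: mex_eq => [i|]; first exact: option_values_below_io.
exact: io_notin_option_values.
Qed.

Theorem mainTheorem11 (n m k : nat) :
  2 <= n -> 1 <= k -> n = 2 ^ m * (2 * k - 1) -> SG n = io n /\ io n = k.
Proof.
move=> n_ge2 k_gt0 n_eq.
have io_n : io n = k.
  case: k k_gt0 n_eq => [// | j] _ ->.
  by rewrite (_ : 2 * j.+1 - 1 = j.*2.+1) ?io_pow2_odd //; lia.
by rewrite /SG sgf_sg_value // /sg_value ltnNge n_ge2.
Qed.
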